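(* Let $W$ be a finite set and let $\preceq_1$ and $\preceq_2$ be total preorders on $W$. Then there is exactly one binary relation $\preceq_3$ on $W$ satisfying (RE1)–(RE3) with respect to $\preceq_1,\preceq_2$; consequently there is a unique revision operator $\circ$ (mapping pairs of total preorders to a relation $\preceq_1\circ\preceq_2=\preceq_3$) satisfying (RE1)–(RE3).
   Context: A total preorder on $W$ is a reflexive, transitive relation under which any two elements are comparable. For a preorder $\preceq_i$ write $\omega\prec_i\omega'$ iff $\omega\preceq_i\omega'$ and not $\omega'\preceq_i\omega$, and $\omega\sim_i\omega'$ iff $\omega\preceq_i\omega'$ and $\omega'\preceq_i\omega$; $\prec_i$ denotes the strict part $\{(x,y)\mid x\prec_i y\}$. The postulates for $\preceq_3=\preceq_1\circ\preceq_2$ are: (RE1) $\preceq_3$ is a total preorder; (RE2) $\prec_2\subseteq\prec_3$; (RE3) if $\omega\sim_2\omega'$, then $\omega\prec_3\omega'$ iff $\omega\prec_1\omega'$. *)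

From mathcomp Require Import all_boot.
Set Implicit Arguments. Unset Strict Implicit. Unset Printing Implicit Defensive.

Definition total_preorder (W : finType) (le : rel W) : Prop :=
  reflexive le /\ transitive le /\ (forall x y, le x y || le y x).

Definition strict (W : finType) (le : rel W) : rel W := fun x y => le x y && ~~ le y x.
Definition indiff (W : finType) (le : rel W) : rel W := fun x y => le x y && le y x.

Definition RE (W : finType) (le1 le2 le3 : rel W) : Prop :=
  total_preorder le3 /\
  (forall x y, strict le2 x y -> strict le3 x y) /\
  (forall x y, indiff le2 x y -> (strict le3 x y <-> strict le1 x y)).

From mathcomp Require Import all_boot.

Set Implicit Arguments.
Unset Strict Implicit.
Unset Printing Implicit Defensive.

(* The postulates force [le1 o le2] to be the lexicographic refinement of
   [le2] by [le1]: (RE2) settles the pairs strictly ordered by [le2], (RE3)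
   settles the [le2]-ties through the strict part of [le1], and a total
   relation is determined by its strict part. *)

Lemma relNstrict (W : finType) (R : rel W) :
  total R -> forall x y, R x y = ~~ strict R y x.
Proof.
by move=> tR x y; rewrite /strict; move: (tR x y); case: (R x y) (R y x) => [] [].
Qed.

Section LexRel.

Variables (W : finType) (le1 le2 : rel W).

Definition lex_rel : rel W := fun x y => le2 x y && (le2 y x ==> le1 x y).

Lemma lex_rel_refl : reflexive le1 -> reflexive le2 -> reflexive lex_rel.
Proof. by move=> r1 r2 x; rewrite /lex_rel r2 r1. Qed.

Lemma lex_rel_trans : transitive le1 -> transitive le2 -> transitive lex_rel.
Proof.
move=> t1 t2 y x z /andP[le2xy le1xy] /andP[le2yz le1yz].
apply/andP; split; first exact: t2 le2xy le2yz.
apply/implyP => le2zx.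
have le2yx : le2 y x := t2 _ _ _ le2yz le2zx.
have le2zy : le2 z y := t2 _ _ _ le2zx le2xy.
exact: t1 (implyP le1xy le2yx) (implyP le1yz le2zy).
Qed.

Lemma lex_rel_total : total le1 -> total le2 -> total lex_rel.
Proof.
move=> c1 c2 x y; rewrite /lex_rel; move: (c1 x y) (c2 x y).
by case: (le1 x y) (le1 y x) (le2 x y) (le2 y x) => [] [] [] [].
Qed.

Lemma total_preorder_lex_rel :
  total_preorder le1 -> total_preorder le2 -> total_preorder lex_rel.
Proof.
move=> [r1 [t1 c1]] [r2 [t2 c2]]; split; first exact: lex_rel_refl.
by split; [exact: lex_rel_trans | exact: lex_rel_total].
Qed.

Lemma strict_lex_rel x y :
  strict lex_rel x y = strict le2 x y || indiff le2 x y && strict le1 x y.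
Proof.
rewrite /strict /indiff /lex_rel.
by case: (le1 x y) (le1 y x) (le2 x y) (le2 y x) => [] [] [] [].
Qed.

Lemma RE_lex_rel :
  total_preorder le1 -> total_preorder le2 -> RE le1 le2 lex_rel.
Proof.
move=> tp1 tp2; split; first exact: total_preorder_lex_rel.
split=> x y; rewrite strict_lex_rel; first by move->.
move=> indxy; have /andP[_ le2yx] := indxy.
by rewrite indxy /strict le2yx andbF.
Qed.

Lemma RE_eq_lex_rel (le3 : rel W) :
  total le1 -> total le2 -> RE le1 le2 le3 -> le3 =2 lex_rel.
Proof.
move=> c1 c2 [[_ [_ c3]] [RE2 RE3]] x y; rewrite /lex_rel.
have [le2yx | nle2yx] := boolP (le2 y x); last first.
  have le2xy : le2 x y by case/orP: (c2 x y) => //; rewrite (negbTE nle2yx).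
  have /RE2/andP[-> _] : strict le2 x y by rewrite /strict le2xy nle2yx.
  by rewrite le2xy.
have [le2xy | nle2xy] := boolP (le2 x y); last first.
  by have /RE2/andP[_ /negbTE ->] : strict le2 y x by rewrite /strict le2yx nle2xy.
have /RE3 eq31 : indiff le2 y x by rewrite /indiff le2yx le2xy.
rewrite (relNstrict c3) (relNstrict c1) /=; congr negb.
by apply/idP/idP => /eq31.
Qed.

End LexRel.

Theorem theorem3 (W : finType) :
  (forall le1 le2 : rel W, total_preorder le1 -> total_preorder le2 ->
     exists le3 : rel W, RE le1 le2 le3 /\
       forall le3' : rel W, RE le1 le2 le3' -> le3' =2 le3) /\
  (exists op : rel W -> rel W -> rel W,
     (forall le1 le2, total_preorder le1 -> total_preorder le2 ->
        RE le1 le2 (op le1 le2)) /\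
     forall op' : rel W -> rel W -> rel W,
       (forall le1 le2, total_preorder le1 -> total_preorder le2 ->
          RE le1 le2 (op' le1 le2)) ->
       forall le1 le2, total_preorder le1 -> total_preorder le2 ->
         op' le1 le2 =2 op le1 le2).
Proof.
have RE_eq le1 le2 le3 : total_preorder le1 -> total_preorder le2 ->
    RE le1 le2 le3 -> le3 =2 lex_rel le1 le2.
  by move=> [_ [_ c1]] [_ [_ c2]]; exact: RE_eq_lex_rel.
split.
  move=> le1 le2 tp1 tp2; exists (lex_rel le1 le2).
  by split; [exact: RE_lex_rel | move=> le3; exact: RE_eq].
exists (@lex_rel W); split; first exact: RE_lex_rel.
by move=> op' REop' le1 le2 tp1 tp2; apply: RE_eq => //; exact: REop'.
Qed.
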